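(* For any constant $C>0$, there exists no (possibly randomized) algorithm for the classical secretary problem with predictions (in the random order model) whose competitive ratio is better than $\max\{1-C\epsilon, 0.348\}$, where $\epsilon$ is the largest multiplicative prediction error of the instance. That is, there is no randomized algorithm such that for every instance $I$, its ratio $r(I)$ satisfies both $r(I) \ge 1 - C\epsilon(I)$ and $r(I) > 0.348$.
   Context: Classical secretary problem with predictions (random order model): there are $n$ candidates $N=\{1,\dots,n\}$, each with an actual value $v(i)>0$ and a predicted value $\hat v(i)\ge 0$; all predicted values (and $n$) are known to the algorithm in advance. The candidates arrive in an order drawn uniformly at random from all $n!$ permutations; upon arrival of a candidate the algorithm learns its index and actual value and must irrevocably decide whether to hire it; at most one candidate may be hired. The algorithm may use internal randomness. For an instance $I$, $\epsilon(I)=\max_{i\in N}|1-\hat v(i)/v(i)|$, and the ratio $r(I)$ of an algorithm is the expected value (over the random order and the algorithm's randomness) of the hired candidate (0 if none) divided by $\max_{i\in N} v(i)$. *)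

From HB Require Import structures.
From mathcomp Require Import all_boot all_order all_algebra all_fingroup.
From mathcomp Require Import reals.
Set Implicit Arguments. Unset Strict Implicit. Unset Printing Implicit Defensive.
Import Order.TTheory GRing.Theory Num.Theory.
Local Open Scope ring_scope.

(* A (possibly randomized) online algorithm, in behavioural form: given n,
   the predicted values vhat, and the history of arrived candidates
   (index, actual value), in arrival order, whose LAST entry is the
   candidate currently being interviewed, it returns the probability with
   which it hires the current candidate (conditionally on not having hired
   anybody yet). *)
Definition algorithm (R : realType) :=
  forall n : nat, ('I_n -> R) -> seq ('I_n * R) -> R.

Definition valid_algorithm (R : realType) (A : algorithm R) : Prop :=
  forall n (vhat : 'I_n -> R) (h : seq ('I_n * R)), 0 <= A n vhat h <= 1.

(* Expected value collected from the remaining arrivals [rest], given the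
   history [hist] and that no candidate has been hired so far. *)
Fixpoint gain (R : realType) (A : algorithm R) (n : nat) (vhat v : 'I_n -> R)
    (hist : seq ('I_n * R)) (rest : seq 'I_n) : R :=
  match rest with
  | [::] => 0
  | i :: rest' =>
      let h := rcons hist (i, v i) in
      A n vhat h * v i + (1 - A n vhat h) * gain A vhat v h rest'
  end.

(* Expected value of the hired candidate, the arrival order being uniform
   over all n! permutations (sigma t = candidate arriving at time t). *)
Definition expected_value (R : realType) (A : algorithm R) (n : nat)
    (v vhat : 'I_n -> R) : R :=
  (n`!%:R)^-1 * \sum_(s : {perm 'I_n}) gain A vhat v [::] [seq s t | t <- enum 'I_n].

Definition maxv (R : realType) (n : nat) (v : 'I_n -> R) : R :=
  \big[Num.max/0]_(i < n) v i.

Definition alg_ratio (R : realType) (A : algorithm R) (n : nat) (v vhat : 'I_n -> R) : R :=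
  expected_value A v vhat / maxv v.

Definition pred_error (R : realType) (n : nat) (v vhat : 'I_n -> R) : R :=
  \big[Num.max/0]_(i < n) `|1 - vhat i / v i|.

From HB Require Import structures.
From mathcomp Require Import all_boot all_order all_algebra all_fingroup.
From mathcomp Require Import reals lra.
Import Order.TTheory GRing.Theory Num.Theory.
Local Open Scope ring_scope.

(* Take three candidates with predictions (2, 1, 1). On the error-free instance
   the ratio must be 1, which forces the algorithm to hire candidate 0 when it
   arrives first.  Now let candidates 1 and 2 be worth x >= 1000 y >= 2000.
   Bounding what happens after the first arrival by the best remaining value,
   three times the expected value is at most 2 + x + y + (p_x - p_y)(x - y),
   where p_z is the probability of hiring a first arrival of value z; so a
   ratio above 0.348 > 1/3 forces p_x > p_y + 0.041.  Alternating the two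
   candidates along the values 2 * 1000^k yields hiring probabilities that grow
   by 0.041 at every step, which is impossible for 25 steps inside [0, 1]. *)

Section FirstArrival.
Variable R : realType.
Set Implicit Arguments. Unset Strict Implicit.
Implicit Types A : algorithm R.

Lemma maxv_ge n (v : 'I_n -> R) i : v i <= maxv v.
Proof. by rewrite /maxv (bigD1 i) //= le_max lexx. Qed.

Lemma pred_error_id n (v : 'I_n -> R) : (forall i, v i != 0) -> pred_error v v = 0.
Proof.
move=> v_neq0; rewrite /pred_error; elim/big_rec: _ => // i x _ ->.
by rewrite divff // subrr normr0 maxxx.
Qed.

Lemma gain_le A n (vhat v : 'I_n -> R) hist rest m :
  valid_algorithm A -> 0 <= m -> {in rest, forall k, v k <= m} ->
  gain A vhat v hist rest <= m.
Proof.
move=> HA m_ge0; elim: rest hist => [|i rest IH] hist //= v_le.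
have /andP[p_ge0 p_le1] := HA n vhat (rcons hist (i, v i)).
set p := A n vhat _; have -> : m = p * m + (1 - p) * m by rewrite -mulrDl addrC subrK mul1r.
apply: lerD; apply: ler_wpM2l; rewrite ?subr_ge0 //.
  by apply: v_le; rewrite inE eqxx.
by apply: IH => k k_rest; apply: v_le; rewrite inE k_rest orbT.
Qed.

(* Rotating the value of [s i] by any [c] is a bijection of the permutations,
   so the sum is invariant; averaging over [c] spreads it evenly over ['I_n.+1]. *)
Lemma sum_perm_eval n (i : 'I_n.+1) (f : 'I_n.+1 -> R) :
  \sum_(s : {perm 'I_n.+1}) f (s i) = n`!%:R * \sum_a f a.
Proof.
have shift c : \sum_(s : {perm 'I_n.+1}) f (s i) = \sum_(s : {perm 'I_n.+1}) f (c + s i).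
  rewrite (reindex_inj (mulIg (perm (addrI c)))) /=.
  by apply: eq_bigr => s _; rewrite permM permE.
apply: (mulfI (_ : n.+1%:R != 0 :> R)); first by rewrite pnatr_eq0.
rewrite mulrA -natrM -factS -card_Sn -sumr_const big_distrl /=.
have -> : n.+1%:R = \sum_(c : 'I_n.+1) (1 : R) by rewrite sumr_const card_ord.
rewrite big_distrl /=; under eq_bigr => c _ do rewrite mul1r (shift c).
rewrite exchange_big /=; apply: eq_bigr => s _.
by rewrite mul1r [RHS](reindex_inj (addIr (s i))).
Qed.

Definition first_arrival_bound A n (vhat v m : 'I_n -> R) (a : 'I_n) : R :=
  let p := A n vhat [:: (a, v a)] in p * v a + (1 - p) * m a.

Lemma gain_perm_le A n (vhat v m : 'I_n.+1 -> R) (s : {perm 'I_n.+1}) :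
  valid_algorithm A -> (forall a, 0 <= m a) -> (forall a k, k != a -> v k <= m a) ->
  gain A vhat v [::] [seq s t | t <- enum 'I_n.+1] <=
  first_arrival_bound A vhat v m (s ord0).
Proof.
move=> HA m_ge0 v_le; rewrite enum_ordSl /= /first_arrival_bound.
have /andP[p_ge0 p_le1] := HA n.+1 vhat [:: (s ord0, v (s ord0))].
apply: lerD => //; apply: ler_wpM2l; rewrite ?subr_ge0 //.
apply: gain_le => // _ /mapP[_ /mapP[t _ ->] ->].
by apply: v_le; rewrite (inj_eq perm_inj) eq_sym neq_lift.
Qed.

Lemma expected_value_le A n (v vhat m : 'I_n.+1 -> R) :
  valid_algorithm A -> (forall a, 0 <= m a) -> (forall a k, k != a -> v k <= m a) ->
  n.+1%:R * expected_value A v vhat <= \sum_a first_arrival_bound A vhat v m a.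
Proof.
move=> HA m_ge0 v_le; rewrite /expected_value factS natrM invfM !mulrA.
rewrite mulfV ?pnatr_eq0 // mul1r ler_pdivrMl ?ltr0n ?fact_gt0 //.
rewrite -(sum_perm_eval ord0); apply: ler_sum => s _; exact: gain_perm_le.
Qed.

Lemma expected_value_ge A n (v vhat : 'I_n -> R) c i :
  0 <= c -> 0 < v i -> c <= alg_ratio A v vhat -> c * v i <= expected_value A v vhat.
Proof.
move=> c_ge0 vi_gt0; have max_gt0 := lt_le_trans vi_gt0 (maxv_ge v i).
rewrite /alg_ratio ler_pdivlMr // => c_le.
by apply: le_trans c_le; apply: ler_wpM2l => //; apply: maxv_ge.
Qed.

Lemma steady_increase_bounded (r : nat -> R) d k :
  (forall k, 0 <= r k <= 1) -> (forall k, r k + d <= r k.+1) -> k%:R * d <= 1.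
Proof.
move=> r_01 r_incr; suff: r 0%N + k%:R * d <= r k.
  by have /andP[r0_ge0 _] := r_01 0%N; have /andP[_ rk_le1] := r_01 k; lra.
elim: k => [|k IH]; first by rewrite mul0r addr0.
by rewrite -natr1 mulrDl mul1r addrA; apply: le_trans (r_incr k); lra.
Qed.

End FirstArrival.

Definition cand1 : 'I_3 := @Ordinal 3 1 isT.
Definition cand2 : 'I_3 := @Ordinal 3 2 isT.

Definition vhat3 {R : realType} : 'I_3 -> R := fun k => if k == ord0 then 2 else 1.

Lemma vhat3_gt0 {R : realType} k : 0 < vhat3 k :> R.
Proof. by rewrite /vhat3; case: ifP. Qed.

Section ThreeCandidates.
Variable R : realType.
Set Implicit Arguments. Unset Strict Implicit.
Implicit Types A : algorithm R.

Lemma sum_ord3 (F : 'I_3 -> R) i j :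
  i != ord0 -> j != ord0 -> i != j -> \sum_a F a = F ord0 + F i + F j.
Proof.
have sum3 : \sum_a F a = F ord0 + F cand1 + F cand2.
  by rewrite !big_ord_recl big_ord0 addr0 addrA; congr (F _ + F _ + F _); apply: val_inj.
move: i j => [[|[|[|i]]] ?] [[|[|[|j]]] ?] //= _ _ _; rewrite sum3; last rewrite addrAC;
  by congr (_ + F _ + F _); apply: val_inj.
Qed.

Lemma hire_top_surely A C :
  valid_algorithm A -> 1 - C * pred_error vhat3 vhat3 <= alg_ratio A vhat3 vhat3 ->
  A 3 vhat3 [:: (ord0, 2)] = 1.
Proof.
move=> HA; rewrite pred_error_id => [|k]; last by rewrite gt_eqF ?vhat3_gt0.
rewrite mulr0 subr0 => /(expected_value_ge ler01 (vhat3_gt0 ord0)).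
pose m (k : 'I_3) : R := if k == ord0 then 1 else 2.
have m_ge0 k : 0 <= m k by rewrite /m; case: ifP.
have v_le a k : k != a -> vhat3 k <= m a.
  by rewrite /vhat3 /m; case: (a =P ord0) => [-> /negbTE -> //|_ _]; case: ifP => _; lra.
have := expected_value_le vhat3 HA m_ge0 v_le.
rewrite (@sum_ord3 _ cand1 cand2) // /first_arrival_bound /vhat3 /m /=.
have /andP[] := HA 3 vhat3 [:: (ord0, 2)].
have /andP[] := HA 3 vhat3 [:: (cand1, 1)].
have /andP[] := HA 3 vhat3 [:: (cand2, 1)].
lra.
Qed.

Lemma hire_prob_gap A (i j : 'I_3) x y :
  valid_algorithm A -> A 3 vhat3 [:: (ord0, 2)] = 1 ->
  (forall v, (forall k, 0 < v k) -> 348%:R / 1000%:R < alg_ratio A v vhat3) ->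
  i != ord0 -> j != ord0 -> i != j -> 2 <= y -> 1000%:R * y <= x ->
  A 3 vhat3 [:: (j, y)] + 41%:R / 1000%:R < A 3 vhat3 [:: (i, x)].
Proof.
move=> HA top_sure robust i0 j0 ij y_ge2 x_ge.
pose v k : R := if k == ord0 then 2 else if k == i then x else y.
pose m k : R := if k == i then y else x.
have v_gt0 k : 0 < v k by rewrite /v; case: ifP => _; [|case: ifP => _]; lra.
have m_ge0 k : 0 <= m k by rewrite /m; case: ifP => _; lra.
have v_le a k : k != a -> v k <= m a.
  rewrite /v /m; case: (a =P i) => [-> /negbTE -> | _ _]; case: ifP => _;
    try case: ifP => _; lra.
have vi : v i = x by rewrite /v (negbTE i0) eqxx.
have vj : v j = y by rewrite /v (negbTE j0) eq_sym (negbTE ij).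
have [m0 mi mj] : [/\ m ord0 = x, m i = y & m j = x].
  by rewrite /m eqxx eq_sym (negbTE i0) eq_sym (negbTE ij).
have ratio_lb : 348%:R / 1000%:R * x <= expected_value A v vhat3.
  by rewrite -vi; apply: expected_value_ge (v_gt0 i) (ltW (robust v v_gt0)); lra.
have := expected_value_le vhat3 HA m_ge0 v_le.
rewrite (sum_ord3 _ i0 j0 ij) /first_arrival_bound vi vj m0 mi mj /v eqxx top_sure.
have /andP[pi_ge0 pi_le1] := HA 3 vhat3 [:: (i, x)].
have /andP[pj_ge0 pj_le1] := HA 3 vhat3 [:: (j, y)].
rewrite ltNge => exp_ub; apply/negP => gap_small.
have : (A 3 vhat3 [:: (i, x)] - A 3 vhat3 [:: (j, y)]) * (x - y) <= 41%:R / 1000%:R * (x - y).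
  by apply: ler_wpM2r; lra.
lra.
Qed.

End ThreeCandidates.

Theorem theorem3 (R : realType) (C : R) :
  0 < C ->
  ~ (exists A : algorithm R,
       valid_algorithm A /\
       forall (n : nat) (v vhat : 'I_n -> R),
         (0 < n)%N ->
         (forall i, 0 < v i) ->
         (forall i, 0 <= vhat i) ->
         1 - C * pred_error v vhat <= alg_ratio A v vhat /\
         348%:R / 1000%:R < alg_ratio A v vhat).
Proof.
move=> _ [A [HA A_ratio]].
have vhat3_ge0 k : 0 <= vhat3 k :> R := ltW (vhat3_gt0 k).
have top_sure : A 3 vhat3 [:: (ord0, 2)] = 1.
  exact: hire_top_surely HA (A_ratio 3 _ _ isT vhat3_gt0 vhat3_ge0).1.
have robust v : (forall k, 0 < v k) -> 348%:R / 1000%:R < alg_ratio A v vhat3.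
  by move=> v_gt0; exact: (A_ratio 3 v _ isT v_gt0 vhat3_ge0).2.
pose pos k : 'I_3 := if odd k then cand1 else cand2.
pose val k : R := 2 * 1000%:R ^+ k.
pose r k := A 3 vhat3 [:: (pos k, val k)].
have gap k : r k + 41%:R / 1000%:R <= r k.+1.
  have val_ge2 : 2 <= val k by rewrite /val ler_peMr ?exprn_ege1 ?ler1n.
  apply/ltW/(hire_prob_gap HA top_sure robust); rewrite /pos /val ?exprS //=;
    by [case: odd | lra].
have := steady_increase_bounded 25 (fun k => HA 3 vhat3 [:: (pos k, val k)]) gap.
lra.
Qed.
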